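(* For every infinite cardinal $\kappa \le 2^{\aleph_0}$ there exist disjoint sets $A, B\subseteq \mathbb{R}$ with $|A|=|B|=\kappa$ such that $A$ and $B$ are both homogeneous and everywhere isomorphic. In particular, for every infinite cardinal $\kappa\le 2^{\aleph_0}$ there is a homogeneous suborder of $\mathbb{R}$ of cardinality $\kappa$.
   Context: A suborder $X\subseteq\mathbb{R}$ is homogeneous if $X\cong X\cap I$ (order-isomorphism) for every open interval $I=(a,b)$ with $-\infty\le a<b\le\infty$. Disjoint $A,B\subseteq\mathbb{R}$ are everywhere isomorphic if $A\cap I\cong B\cap I$ for every such open interval $I$. *)

From Stdlib Require Import Reals List.
From Coquelicot Require Import Rbar.
Open Scope R_scope.

Definition subset_R := R -> Prop.

Definition open_int (a b : Rbar) : subset_R :=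
  fun x => Rbar_lt a (Finite x) /\ Rbar_lt (Finite x) b.

Definition inter (X Y : subset_R) : subset_R := fun x => X x /\ Y x.

Definition order_iso (X Y : subset_R) : Prop :=
  exists f : R -> R,
    (forall x, X x -> Y (f x)) /\
    (forall y, Y y -> exists x, X x /\ f x = y) /\
    (forall x y, X x -> X y -> x < y -> f x < f y).

Definition homogeneous (X : subset_R) : Prop :=
  forall a b : Rbar, Rbar_lt a b -> order_iso X (inter X (open_int a b)).

Definition everywhere_isomorphic (A B : subset_R) : Prop :=
  forall a b : Rbar, Rbar_lt a b ->
    order_iso (inter A (open_int a b)) (inter B (open_int a b)).

Definition disjoint (A B : subset_R) : Prop := forall x, ~ (A x /\ B x).

Definition equipotent (X Y : subset_R) : Prop :=
  exists f : R -> R,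
    (forall x, X x -> Y (f x)) /\
    (forall y, Y y -> exists x, X x /\ f x = y) /\
    (forall x y, X x -> X y -> f x = f y -> x = y).

Definition infinite_set (X : subset_R) : Prop :=
  forall l : list R, exists x, X x /\ ~ In x l.

(* Let K be an infinite subset of R.  Fix the irrational theta = sqrt 2 and, by
   Zorn's lemma, a Q-linear subspace M of R containing Q with R = M + Q theta
   and theta not in M.  Using kappa * aleph_0 = kappa (again by Zorn), R and
   hence K inject into M by some psi.  Let A be the set of all q psi(k) + r with
   k in K and q > 0, r rational, and B = A + theta.  Then
   - |A| = |K| (Cantor-Bernstein, using kappa * aleph_0 = kappa for K);
   - A is closed under positive rational affine maps, and every such set is
     homogeneous: a piecewise rational affine map onto any interval (a, b) is
     built from a rational sequence indexed by Z, cofinal in (a, b);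
   - A and B lie in M and M + theta, which are disjoint;
   - B is homogeneous and isomorphic to A by translation, so A and B are
     everywhere isomorphic: A ∩ I ≅ A ≅ B ≅ B ∩ I. *)

From Pilot Require Import Defs.
From mathcomp Require Import ssreflect ssrbool classical_sets cardinality boolp Rstruct_topology.
From Stdlib Require Import Reals List Arith Lra Lia QArith Qreals Classical ClassicalEpsilon Cantor.
From Coquelicot Require Import Rbar.
Import Defs.

Lemma maximal_set_of_chains (T : Type) (P : (T -> Prop) -> Prop) :
  (forall F : (T -> Prop) -> Prop, (forall X, F X -> P X) ->
     (forall X Y, F X -> F Y -> (forall x, X x -> Y x) \/ (forall x, Y x -> X x)) ->
     P (fun x => exists X, F X /\ X x)) ->
  exists A, P A /\
    forall B, (forall x, A x -> B x) -> (exists x, B x /\ ~ A x) -> ~ P B.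
Proof.
move=> chainP.
have unionP : forall F : set (set T),
    (F `<=` P)%classic -> total_on F subset -> P (\bigcup_(X in F) X)%classic.
  move=> F FP Ftot.
  have -> : (\bigcup_(X in F) X)%classic = (fun x => exists X, F X /\ X x).
    by apply/funext => x; apply/propext; split => [[X FX Xx]|[X [FX Xx]]]; exists X.
  apply: chainP; first exact: FP.
  by move=> X Y FX FY; case: (Ftot X Y FX FY) => ?; [left|right].
have [A [PA Amax]] := Zorn_bigcup unionP.
exists A; split => // B AB [x [Bx nAx]] PB; apply: (Amax B) => //.
by split => // BA; exact: nAx (BA x Bx).
Qed.

Lemma equipotent_of_injections (X Y : R -> Prop) (f g : R -> R) :
  (forall x, X x -> Y (f x)) -> (forall x y, X x -> X y -> f x = f y -> x = y) ->
  (forall y, Y y -> X (g y)) -> (forall x y, Y x -> Y y -> g x = g y -> x = y) ->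
  equipotent X Y.
Proof.
move=> fXY finj gYX ginj.
have XY : (X #<= Y)%card.
  apply/pcard_leP; apply/injfunPex; exists f; first by move=> x Xx; apply: fXY.
  by move=> x y; rewrite !inE => Xx Xy; apply: finj.
have YX : (Y #<= X)%card.
  apply/pcard_leP; apply/injfunPex; exists g; first by move=> x Xx; apply: gYX.
  by move=> x y; rewrite !inE => Xx Xy; apply: ginj.
have /card_set_bijP [h [hf hi hs]] := Cantor_Bernstein XY YX.
exists h; split; first by move=> x Xx; apply: hf.
split; first by move=> y Yy; have [x Xx <-] := hs y Yy; exists x.
by move=> x y Xx Xy; apply: hi; rewrite inE.
Qed.

Definition inf_set {T : Type} (X : T -> Prop) : Prop :=
  forall l : list T, exists x, X x /\ ~ In x l.

Lemma inf_set_of_injective_seq {T : Type} (X : T -> Prop) (s : nat -> T) :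
  (forall n, X (s n)) -> (forall n m, s n = s m -> n = m) -> inf_set X.
Proof.
intros Xs s_inj.
assert (fresh : forall l N, exists n, (N <= n)%nat /\ ~ In (s n) l).
{ induction l as [|a l IH]; intros N.
  - exists N; split; [lia | simpl; tauto].
  - destruct (IH N) as [n [Nn nin]].
    destruct (classic (s n = a)) as [E|E].
    + destruct (IH (S n)) as [m [nm min]].
      exists m; split; [lia|]. simpl. intros [E'|E']; [|tauto].
      rewrite <- E in E'. apply s_inj in E'. lia.
    + exists n; split; [lia|]. simpl. intros [E'|E']; [congruence|tauto]. }
intros l. destruct (fresh l O) as [n [_ nin]]. exists (s n); auto.
Qed.

Fixpoint fresh_choices {T : Type} (c : list T -> T) (n : nat) : list T :=
  match n with O => nil | S k => c (fresh_choices c k) :: fresh_choices c k end.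

Lemma fresh_choices_In {T : Type} (c : list T -> T) :
  forall n m, (m < n)%nat -> In (c (fresh_choices c m)) (fresh_choices c n).
Proof.
induction n as [|n IH]; intros m Hm; [lia|].
simpl. destruct (Nat.eq_dec m n) as [->|ne]; [left; reflexivity | right; apply IH; lia].
Qed.

Lemma injective_seq_of_inf_set {T : Type} (X : T -> Prop) : inf_set X ->
  exists s : nat -> T, (forall n, X (s n)) /\ (forall n m, s n = s m -> n = m).
Proof.
intros HX.
set (c l := proj1_sig (constructive_indefinite_description _ (HX l))).
assert (Hc : forall l, X (c l) /\ ~ In (c l) l).
{ intros l. unfold c. destruct (constructive_indefinite_description _ (HX l)); auto. }
exists (fun n => c (fresh_choices c n)). split; [intros n; apply Hc|].
intros n m E.
destruct (Nat.lt_total n m) as [L|[L|L]]; auto; exfalso.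
- apply (proj2 (Hc (fresh_choices c m))). rewrite <- E. apply fresh_choices_In; auto.
- apply (proj2 (Hc (fresh_choices c n))). rewrite E. apply fresh_choices_In; auto.
Qed.

Definition pair_code (i n : nat) : nat := Cantor.to_nat (i, n).
Arguments pair_code : simpl never.

Lemma pair_code_inj i n i' n' : pair_code i n = pair_code i' n' -> i = i' /\ n = n'.
Proof. unfold pair_code. intros E. apply Cantor.to_nat_inj in E. injection E; auto. Qed.

(* [G] is the graph of an injection [D * nat -> D] for a set [D] contained in [X],
   namely the set [graph_dom G] of the [x] that have an image [G (x, 0, z)]. *)
Record nat_graph {T : Type} (X : T -> Prop) (G : T * nat * T -> Prop) : Prop := {
  ng_src : forall x n y, G (x, n, y) -> X x;
  ng_fun : forall x n y y', G (x, n, y) -> G (x, n, y') -> y = y';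
  ng_inj : forall x n y x' n', G (x, n, y) -> G (x', n', y) -> x = x' /\ n = n';
  ng_total : forall x n y m, G (x, n, y) -> exists z, G (x, m, z);
  ng_closed : forall x n y, G (x, n, y) -> exists z, G (y, O, z) }.

Definition graph_dom {T : Type} (G : T * nat * T -> Prop) (x : T) : Prop :=
  exists z, G (x, O, z).

Lemma graph_dom_of {T : Type} (X : T -> Prop) G x n y :
  nat_graph X G -> G (x, n, y) -> graph_dom G x.
Proof. intros HG Gp. exact (ng_total X G HG x n y O Gp). Qed.

Lemma nat_graph_chain {T : Type} (X : T -> Prop) (F : (T * nat * T -> Prop) -> Prop) :
  (forall G, F G -> nat_graph X G) ->
  (forall G1 G2, F G1 -> F G2 -> (forall p, G1 p -> G2 p) \/ (forall p, G2 p -> G1 p)) ->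
  nat_graph X (fun p => exists G, F G /\ G p).
Proof.
intros FP Ftot.
assert (common : forall p q, (exists G, F G /\ G p) -> (exists G, F G /\ G q) ->
          exists G, F G /\ G p /\ G q).
{ intros p q [G1 [F1 G1p]] [G2 [F2 G2q]].
  destruct (Ftot G1 G2 F1 F2) as [S|S]; [exists G2 | exists G1]; auto. }
constructor.
- intros x n y [G [FG Gp]]. exact (ng_src X G (FP G FG) x n y Gp).
- intros x n y y' H1 H2. destruct (common _ _ H1 H2) as [G [FG [G1 G2]]].
  exact (ng_fun X G (FP G FG) x n y y' G1 G2).
- intros x n y x' n' H1 H2. destruct (common _ _ H1 H2) as [G [FG [G1 G2]]].
  exact (ng_inj X G (FP G FG) x n y x' n' G1 G2).
- intros x n y m [G [FG Gp]].
  destruct (ng_total X G (FP G FG) x n y m Gp) as [z Gz]. exists z, G; auto.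
- intros x n y [G [FG Gp]].
  destruct (ng_closed X G (FP G FG) x n y Gp) as [z Gz]. exists z, G; auto.
Qed.

(* A nat-graph whose domain misses infinitely many points of [X] is not maximal:
   an injective sequence [c] of missed points is adjoined by [c i, n |-> c <i,n>]. *)
Lemma nat_graph_extend {T : Type} (X : T -> Prop) G :
  nat_graph X G -> inf_set (fun x => X x /\ ~ graph_dom G x) ->
  exists G', nat_graph X G' /\ (forall p, G p -> G' p) /\ (exists p, G' p /\ ~ G p).
Proof.
intros HG Hinf.
destruct (injective_seq_of_inf_set _ Hinf) as [c [Hc c_inj]].
assert (c_new : forall i x n y, G (x, n, y) -> x <> c i /\ y <> c i).
{ intros i x n y Gp. split; intros ->; apply (proj2 (Hc i)).
  - exact (graph_dom_of X G _ _ _ HG Gp).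
  - exact (ng_closed X G HG _ _ _ Gp). }
exists (fun p => G p \/ exists i n, p = (c i, n, c (pair_code i n))).
split; [|split].
- constructor.
  + intros x n y [Gp|[i [m E]]]; [exact (ng_src X G HG x n y Gp)|].
    injection E as -> _ _. apply Hc.
  + intros x n y y' [G1|[i [m E1]]] [G2|[i' [m' E2]]].
    * exact (ng_fun X G HG x n y y' G1 G2).
    * injection E2 as -> _ _. exfalso. exact (proj1 (c_new i' _ _ _ G1) eq_refl).
    * injection E1 as -> _ _. exfalso. exact (proj1 (c_new i _ _ _ G2) eq_refl).
    * injection E1 as Ex -> ->. injection E2 as Ex' -> ->.
      rewrite Ex' in Ex. apply c_inj in Ex. subst. reflexivity.
  + intros x n y x' n' [G1|[i [m E1]]] [G2|[i' [m' E2]]].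
    * exact (ng_inj X G HG x n y x' n' G1 G2).
    * injection E2 as _ _ ->. exfalso. exact (proj2 (c_new _ _ _ _ G1) eq_refl).
    * injection E1 as _ _ ->. exfalso. exact (proj2 (c_new _ _ _ _ G2) eq_refl).
    * injection E1 as -> -> ->. injection E2 as Ex En Ey.
      apply c_inj, pair_code_inj in Ey. destruct Ey as [-> ->]. auto.
  + intros x n y m [Gp|[i [k E]]].
    * destruct (ng_total X G HG x n y m Gp) as [z Gz]. exists z; left; exact Gz.
    * injection E as -> -> ->. exists (c (pair_code i m)). right. exists i, m. reflexivity.
  + intros x n y [Gp|[i [k E]]].
    * destruct (ng_closed X G HG x n y Gp) as [z Gz]. exists z; left; exact Gz.
    * injection E as -> -> ->. exists (c (pair_code (pair_code i k) O)).
      right. exists (pair_code i k), O. reflexivity.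
- intros p Gp. left. exact Gp.
- exists (c O, O, c (pair_code O O)). split; [right; exists O, O; reflexivity|].
  intros Gp. exact (proj1 (c_new O _ _ _ Gp) eq_refl).
Qed.

(* A nat-graph whose domain contains all but finitely many points of the
   infinite set [X] yields an injection [X * nat -> X]: the points outside the
   domain are first coded injectively into the fibre of one domain point. *)
Lemma absorption_of_cofinite_graph {T : Type} (X : T -> Prop) G (l : list T) :
  inf_set X -> nat_graph X G -> (forall x, X x -> ~ graph_dom G x -> In x l) ->
  exists f : T -> nat -> T, (forall x n, X x -> X (f x n)) /\
    (forall x n x' n', X x -> X x' -> f x n = f x' n' -> x = x' /\ n = n').
Proof.
intros HX HG Hl.
destruct (HX l) as [y0 [Xy0 ny0]].
assert (Hy0 : graph_dom G y0) by (apply NNPP; intros nd; apply ny0, Hl; auto).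
set (g x n := epsilon (inhabits y0) (fun z => G (x, n, z))).
assert (Hg : forall x n, graph_dom G x -> G (x, n, g x n)).
{ intros x n [z Gz]. apply epsilon_spec. exact (ng_total X G HG x O z n Gz). }
set (idx x := epsilon (inhabits O) (fun k => nth_error l k = Some x)).
assert (Hidx : forall x, In x l -> nth_error l (idx x) = Some x).
{ intros x Hx. apply epsilon_spec. apply In_nth_error; auto. }
set (code x := if excluded_middle_informative (graph_dom G x) then (x, O) else (y0, S (idx x))).
assert (code_dom : forall x, graph_dom G (fst (code x))).
{ intros x. unfold code. destruct (excluded_middle_informative (graph_dom G x)); auto. }
assert (code_inj : forall x x', X x -> X x' -> code x = code x' -> x = x').
{ intros x x' Xx Xx'. unfold code.
  destruct (excluded_middle_informative (graph_dom G x)) as [d|nd];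
  destruct (excluded_middle_informative (graph_dom G x')) as [d'|nd'];
  intros E.
  - injection E as Ex. exact Ex.
  - discriminate E.
  - discriminate E.
  - injection E as Ek. assert (E1 := Hidx x (Hl x Xx nd)).
    assert (E2 := Hidx x' (Hl x' Xx' nd')). rewrite Ek E2 in E1. injection E1; auto. }
exists (fun x n => g (fst (code x)) (pair_code (snd (code x)) n)). split.
- intros x n _. destruct (ng_closed X G HG _ _ _ (Hg _ (pair_code (snd (code x)) n) (code_dom x)))
    as [z Gz].
  exact (ng_src X G HG _ _ _ Gz).
- intros x n x' n' Xx Xx' E.
  assert (G1 := Hg _ (pair_code (snd (code x)) n) (code_dom x)).
  assert (G2 := Hg _ (pair_code (snd (code x')) n') (code_dom x')).
  rewrite E in G1. destruct (ng_inj X G HG _ _ _ _ _ G1 G2) as [Efst Epair].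
  apply pair_code_inj in Epair. destruct Epair as [Esnd ->]. split; auto.
  apply code_inj; auto. destruct (code x), (code x'); simpl in *; subst; reflexivity.
Qed.

(* kappa * aleph_0 <= kappa: every infinite set [X] admits an injection
   [X * nat -> X]. Take a maximal nat-graph on [X] (Zorn); by maximality its
   domain is cofinite in [X]. *)
Lemma nat_absorption {T : Type} (X : T -> Prop) : inf_set X ->
  exists f : T -> nat -> T, (forall x n, X x -> X (f x n)) /\
    (forall x n x' n', X x -> X x' -> f x n = f x' n' -> x = x' /\ n = n').
Proof.
intros HX.
destruct (maximal_set_of_chains _ (nat_graph X) (nat_graph_chain X)) as [G [HG Gmax]].
assert (cofinite : exists l, forall x, X x -> ~ graph_dom G x -> In x l).
{ apply NNPP; intros Hn.
  destruct (nat_graph_extend X G HG) as [G' [HG' [sub new]]].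
  - intros l. apply NNPP; intros Hl. apply Hn. exists l. intros x Xx nd.
    apply NNPP; intros nin. apply Hl. exists x; auto.
  - exact (Gmax G' sub new HG'). }
destruct cofinite as [l Hl].
exact (absorption_of_cofinite_graph X G l HX HG Hl).
Qed.

Open Scope R_scope.

Definition int_code (z : Z) : nat := pair_code (Z.to_nat z) (Z.to_nat (- z)).
Definition rat_code (q : Q) : nat := pair_code (int_code (Qnum q)) (Pos.to_nat (Qden q)).

Lemma rat_code_inj (p q : Q) : rat_code p = rat_code q -> p = q.
Proof.
destruct p as [a b], q as [c d]. unfold rat_code, int_code; simpl. intros E.
apply pair_code_inj in E. destruct E as [Enum Eden].
apply pair_code_inj in Enum. destruct Enum as [Epos Eneg].
assert (a = c) by lia. assert (b = d) by lia. subst; reflexivity.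
Qed.

Lemma Q2R_inject_Z (z : Z) : Q2R (inject_Z z) = IZR z.
Proof. unfold Q2R; simpl; lra. Qed.

Lemma Q2R_neq0 (q : Q) : Q2R q <> 0 -> ~ q == 0.
Proof. intros H E. apply H. rewrite (Qeq_eqR _ _ E). exact RMicromega.Q2R_0. Qed.

Lemma rat_dense (u v : R) : u < v -> exists q : Q, u < Q2R q < v.
Proof.
intros Huv.
assert (Hinv : 0 < / (v - u)) by (apply Rinv_0_lt_compat; lra).
destruct (archimed (/ (v - u))) as [Hn _].
set (n := up (/ (v - u))) in *.
assert (n_pos : 0 < IZR n) by lra.
assert (gap : 1 < (v - u) * IZR n).
{ apply Rmult_lt_reg_l with (/ (v - u)); auto. field_simplify; lra. }
destruct (archimed (u * IZR n)) as [Hm1 Hm2].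
exists (Qmake (up (u * IZR n)) (Z.to_pos n)).
unfold Q2R; simpl. rewrite Z2Pos.id; [|apply lt_IZR; lra].
split; apply Rmult_lt_reg_r with (IZR n); auto; field_simplify; nra.
Qed.

(* sqrt 2 is irrational, by infinite descent on [p^2 = 2 d^2]. *)
Lemma no_int_sqrt2 : forall k : nat, forall p d : Z,
  Z.abs_nat d = k -> (p * p = 2 * d * d)%Z -> d = 0%Z.
Proof.
intros k. induction k as [k IH] using (well_founded_induction lt_wf).
intros p d Hk E.
destruct (Z.Even_or_Odd p) as [[p' ->]|[p' ->]]; [|exfalso; nia].
destruct (Z.Even_or_Odd d) as [[d' ->]|[d' ->]]; [|exfalso; nia].
destruct (Z.eq_dec d' 0) as [->|nz]; [lia|].
assert (d' = 0%Z) by (apply (IH (Z.abs_nat d')) with (p := p'); [lia | reflexivity | nia]).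
lia.
Qed.

Lemma sqrt2_irrational (q : Q) : Q2R q <> sqrt 2.
Proof.
destruct q as [p d]. unfold Q2R; simpl. intros E.
assert (Hd : 0 < IZR (Z.pos d)) by (apply IZR_lt; lia).
assert (Hp : IZR p = sqrt 2 * IZR (Z.pos d)) by (rewrite <- E; field; lra).
assert (Hsq : IZR p * IZR p = 2 * IZR (Z.pos d) * IZR (Z.pos d)).
{ rewrite Hp. replace 2 with (sqrt 2 * sqrt 2) at 3 by (apply sqrt_sqrt; lra). ring. }
rewrite <- !mult_IZR in Hsq. apply eq_IZR in Hsq.
assert (Z.pos d = 0%Z) by (eapply no_int_sqrt2; eauto). lia.
Qed.

(* [M] is a Q-linear subspace of R avoiding [theta] which contains Q as soon as
   it is nonempty; the last clause lets the empty set qualify, so that Zorn's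
   lemma applies to such sets. *)
Record avoiding_subspace (theta : R) (M : R -> Prop) : Prop := {
  av_add : forall x y, M x -> M y -> M (x + y);
  av_scale : forall q x, M x -> M (Q2R q * x);
  av_rat : forall x, M x -> forall q, M (Q2R q);
  av_avoid : ~ M theta }.

Lemma avoiding_subspace_chain theta (F : (R -> Prop) -> Prop) :
  (forall M, F M -> avoiding_subspace theta M) ->
  (forall M1 M2, F M1 -> F M2 -> (forall x, M1 x -> M2 x) \/ (forall x, M2 x -> M1 x)) ->
  avoiding_subspace theta (fun x => exists M, F M /\ M x).
Proof.
intros FP Ftot. constructor.
- intros x y [M1 [F1 M1x]] [M2 [F2 M2y]].
  destruct (Ftot M1 M2 F1 F2) as [S|S].
  + exists M2. split; auto. apply (av_add theta M2 (FP M2 F2)); auto.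
  + exists M1. split; auto. apply (av_add theta M1 (FP M1 F1)); auto.
- intros q x [M [FM Mx]]. exists M. split; auto. apply (av_scale theta M (FP M FM)); auto.
- intros x [M [FM Mx]] q. exists M. split; auto. exact (av_rat theta M (FP M FM) x Mx q).
- intros [M [FM Mt]]. exact (av_avoid theta M (FP M FM) Mt).
Qed.

Definition span_with (M : R -> Prop) (x : R) : R -> Prop :=
  fun z => exists h q, M h /\ z = h + Q2R q * x.

Lemma span_with_avoiding theta M x :
  avoiding_subspace theta M -> M 0 -> ~ span_with M x theta ->
  avoiding_subspace theta (span_with M x).
Proof.
intros HM M0 nth. constructor; auto.
- intros a b [h1 [q1 [M1 ->]]] [h2 [q2 [M2 ->]]]. exists (h1 + h2), (q1 + q2)%Q.
  split; [apply (av_add theta M HM); auto|]. rewrite Q2R_plus. ring.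
- intros q a [h [q1 [Mh ->]]]. exists (Q2R q * h), (q * q1)%Q.
  split; [apply (av_scale theta M HM); auto|]. rewrite Q2R_mult. ring.
- intros a [h [q1 [Mh _]]] q. exists (Q2R q), 0%Q.
  split; [exact (av_rat theta M HM h Mh q)|]. rewrite RMicromega.Q2R_0. ring.
Qed.

(* For irrational [theta], a Q-subspace [M] containing Q with R = M + Q theta
   and [theta] not in [M]: take [M] maximal avoiding [theta]; for [x] outside
   [M], maximality puts [theta] in [M + Q x], and solving for [x] decomposes it. *)
Lemma rational_complement (theta : R) : (forall q, Q2R q <> theta) ->
  exists M : R -> Prop,
    (forall x y, M x -> M y -> M (x + y)) /\ (forall q x, M x -> M (Q2R q * x)) /\
    (forall q, M (Q2R q)) /\ ~ M theta /\
    (forall x, exists h r, M h /\ x = h + Q2R r * theta).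
Proof.
intros theta_irr.
destruct (maximal_set_of_chains R (avoiding_subspace theta) (avoiding_subspace_chain theta))
  as [M [HM Mmax]].
assert (MQ : forall q, M (Q2R q)).
{ assert (Mne : exists x, M x).
  { apply NNPP. intros Hn. apply (Mmax (fun x => exists q, x = Q2R q)).
    - intros x Mx. exfalso. apply Hn. exists x; auto.
    - exists (Q2R 0). split; [exists 0%Q; auto|]. intros M0. apply Hn. exists (Q2R 0); auto.
    - constructor.
      + intros x y [q1 ->] [q2 ->]. exists (q1 + q2)%Q. rewrite Q2R_plus. reflexivity.
      + intros q x [q1 ->]. exists (q * q1)%Q. rewrite Q2R_mult. reflexivity.
      + intros x _ q. exists q; reflexivity.
      + intros [q E]. exact (theta_irr q (eq_sym E)). }
  destruct Mne as [x0 Mx0]. exact (av_rat theta M HM x0 Mx0). }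
assert (M0 : M 0) by (rewrite <- RMicromega.Q2R_0; apply MQ).
exists M. split; [exact (av_add theta M HM)|]. split; [exact (av_scale theta M HM)|].
split; [exact MQ|]. split; [exact (av_avoid theta M HM)|].
intros x. destruct (classic (M x)) as [Mx|nMx].
{ exists x, 0%Q. split; auto. rewrite RMicromega.Q2R_0. ring. }
assert (theta_span : span_with M x theta).
{ apply NNPP. intros nth. apply (Mmax (span_with M x)).
  - intros z Mz. exists z, 0%Q. split; auto. rewrite RMicromega.Q2R_0. ring.
  - exists x. split; auto. exists 0, 1%Q. split; auto. rewrite RMicromega.Q2R_1. ring.
  - apply span_with_avoiding; auto. }
destruct theta_span as [h [q [Mh E]]].
assert (Hq : Q2R q <> 0).
{ intros Hq. apply (av_avoid theta M HM). rewrite E Hq. replace (h + 0 * x) with h by ring. exact Mh. }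
exists (Q2R (- / q) * h), (/ q)%Q. split; [apply (av_scale theta M HM); auto|].
rewrite Q2R_opp Q2R_inv; [|apply Q2R_neq0; auto]. rewrite E. field. exact Hq.
Qed.

(* If R = M + Q theta with [M] infinite, then R injects into [M]: decompose
   [x = h + r theta] and send [x] to [f h (code r)], where [f : M * nat -> M]
   is the injection of [nat_absorption]. *)
Lemma injection_into_complement (M : R -> Prop) (theta : R) :
  inf_set M -> (forall x, exists h r, M h /\ x = h + Q2R r * theta) ->
  exists psi : R -> R, (forall x, M (psi x)) /\ (forall x y, psi x = psi y -> x = y).
Proof.
intros Minf Mdec.
destruct (nat_absorption M Minf) as [f [fM f_inj]].
set (dec x := epsilon (inhabits (0, 0%Q))
                (fun p : R * Q => M (fst p) /\ x = fst p + Q2R (snd p) * theta)).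
assert (Hdec : forall x, M (fst (dec x)) /\ x = fst (dec x) + Q2R (snd (dec x)) * theta).
{ intros x. apply epsilon_spec. destruct (Mdec x) as [h [r Hhr]]. exists (h, r). exact Hhr. }
exists (fun x => f (fst (dec x)) (rat_code (snd (dec x)))). split.
- intros x. apply fM, Hdec.
- intros x y E. apply f_inj in E; [|apply Hdec|apply Hdec]. destruct E as [Eh Er].
  apply rat_code_inj in Er. rewrite (proj2 (Hdec x)) (proj2 (Hdec y)) Eh Er. reflexivity.
Qed.

Definition affine_closed (X : R -> Prop) : Prop :=
  forall x q r, X x -> 0 < Q2R q -> X (Q2R q * x + Q2R r).

Lemma open_int_between a b u v w :
  open_int a b u -> open_int a b v -> u <= w <= v -> open_int a b w.
Proof.
unfold open_int. intros [Hu1 Hu2] [Hv1 Hv2] [H1 H2]. split.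
- destruct a as [a| |]; simpl in *; auto; lra.
- destruct b as [b| |]; simpl in *; auto; lra.
Qed.

Record cofinal_seq (a b : Rbar) (u : Z -> R) : Prop := {
  cs_in : forall n, open_int a b (u n);
  cs_step : forall n, u n < u (n + 1)%Z;
  cs_low : forall y, open_int a b y -> exists m, u m <= y;
  cs_high : forall y, open_int a b y -> exists m, y < u m }.

Lemma step_mono (u : Z -> R) : (forall n, u n < u (n + 1)%Z) ->
  forall m n, (m <= n)%Z -> u m <= u n.
Proof.
intros step m n Hmn. replace n with (m + Z.of_nat (Z.to_nat (n - m)))%Z by lia.
induction (Z.to_nat (n - m)) as [|k IH]; [rewrite Z.add_0_r; lra|].
replace (m + Z.of_nat (S k))%Z with (m + Z.of_nat k + 1)%Z by lia.
specialize (step (m + Z.of_nat k)%Z). lra.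
Qed.

Lemma step_locate (u : Z -> R) (y : R) m M : (forall n, u n < u (n + 1)%Z) ->
  u m <= y -> y < u M -> exists n, u n <= y < u (n + 1)%Z.
Proof.
intros step Hm HM.
assert (Hk : forall k m, u m <= y -> y < u (m + Z.of_nat k)%Z ->
           exists n, u n <= y < u (n + 1)%Z).
{ induction k as [|k IH]; intros m0 H1 H2; [rewrite Z.add_0_r in H2; lra|].
  destruct (Rlt_le_dec y (u (m0 + 1)%Z)) as [L|L]; [exists m0; split; auto|].
  apply (IH (m0 + 1)%Z); auto.
  replace (m0 + 1 + Z.of_nat k)%Z with (m0 + Z.of_nat (S k))%Z by lia. auto. }
destruct (Z.lt_ge_cases m M) as [L|L].
- apply (Hk (Z.to_nat (M - m)) m); auto.
  replace (m + Z.of_nat (Z.to_nat (M - m)))%Z with M by lia. auto.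
- assert (u M <= u m) by (apply step_mono; auto; lia). lra.
Qed.

Lemma exp_Z_bounds (t : R) : 0 < t ->
  (exists n, exp (IZR n) < t) /\ (exists n, t < exp (IZR n)).
Proof.
intros Ht. destruct (base_Int_part (ln t)) as [H1 H2].
set (k := Int_part (ln t)) in *. rewrite <- (exp_ln t Ht).
split; [exists (k - 1)%Z | exists (k + 1)%Z]; apply exp_increasing;
  [rewrite minus_IZR | rewrite plus_IZR]; lra.
Qed.

Lemma exp_Z_step (n : Z) : exp (IZR n) < exp (IZR (n + 1)%Z).
Proof. apply exp_increasing. rewrite plus_IZR. lra. Qed.

Lemma cofinal_seq_line : cofinal_seq m_infty p_infty IZR.
Proof.
constructor.
- intros n. split; exact I.
- intros n. rewrite plus_IZR. lra.
- intros y _. exists (Int_part y). apply base_Int_part.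
- intros y _. exists (Int_part y + 1)%Z. rewrite plus_IZR.
  destruct (base_Int_part y). lra.
Qed.

Lemma cofinal_seq_right_ray (a : R) :
  cofinal_seq (Finite a) p_infty (fun n => a + exp (IZR n)).
Proof.
constructor.
- intros n. split; [simpl; assert (H := exp_pos (IZR n)); lra | exact I].
- intros n. assert (H := exp_Z_step n). lra.
- intros y [Hy _]. simpl in Hy. destruct (exp_Z_bounds (y - a)) as [[m Hm] _]; [lra|].
  exists m. lra.
- intros y [Hy _]. simpl in Hy. destruct (exp_Z_bounds (y - a)) as [_ [m Hm]]; [lra|].
  exists m. lra.
Qed.

Lemma cofinal_seq_left_ray (b : R) :
  cofinal_seq m_infty (Finite b) (fun n => b - exp (IZR (- n))).
Proof.
constructor.
- intros n. split; [exact I | simpl; assert (H := exp_pos (IZR (- n))); lra].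
- intros n. assert (H := exp_Z_step (- (n + 1))).
  replace (- (n + 1) + 1)%Z with (- n)%Z in H by lia. lra.
- intros y [_ Hy]. simpl in Hy. destruct (exp_Z_bounds (b - y)) as [_ [m Hm]]; [lra|].
  exists (- m)%Z. rewrite Z.opp_involutive. lra.
- intros y [_ Hy]. simpl in Hy. destruct (exp_Z_bounds (b - y)) as [[m Hm] _]; [lra|].
  exists (- m)%Z. rewrite Z.opp_involutive. lra.
Qed.

Lemma bounded_seq_compare (a b y E : R) : a < y < b -> 0 < E ->
  (b - (b - a) / (1 + E) <= y <-> E <= (y - a) / (b - y)).
Proof.
intros [Ha Hb] HE.
assert (HD : (b - a) / (1 + E) * (1 + E) = b - a) by (field; lra).
assert (HT : (y - a) / (b - y) * (b - y) = y - a) by (field; lra).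
set (D := (b - a) / (1 + E)) in *. set (T := (y - a) / (b - y)) in *.
split; intros H; nra.
Qed.

Lemma cofinal_seq_bounded (a b : R) : a < b ->
  cofinal_seq (Finite a) (Finite b) (fun n => b - (b - a) / (1 + exp (IZR n))).
Proof.
intros Hab.
assert (gap_pos : forall E, 0 < E -> 0 < (b - a) / (1 + E) < b - a).
{ intros E HE. assert (HD : (b - a) / (1 + E) * (1 + E) = b - a) by (field; lra).
  set (D := (b - a) / (1 + E)) in *. split; nra. }
constructor.
- intros n. destruct (gap_pos _ (exp_pos (IZR n))). split; simpl; lra.
- intros n. assert (Hstep := exp_Z_step n). assert (Hpos := exp_pos (IZR n)).
  assert ((b - a) / (1 + exp (IZR (n + 1))) < (b - a) / (1 + exp (IZR n))); [|lra].
  apply Rmult_lt_compat_l; [lra|]. apply Rinv_lt_contravar; nra.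
- intros y [Ha Hb]. simpl in Ha, Hb.
  assert (Ht : 0 < (y - a) / (b - y)) by (apply Rdiv_lt_0_compat; lra).
  destruct (exp_Z_bounds _ Ht) as [[m Hm] _]. exists m.
  apply bounded_seq_compare; [lra | apply exp_pos | lra].
- intros y [Ha Hb]. simpl in Ha, Hb.
  assert (Ht : 0 < (y - a) / (b - y)) by (apply Rdiv_lt_0_compat; lra).
  destruct (exp_Z_bounds _ Ht) as [_ [m Hm]]. exists m.
  apply Rnot_le_lt. rewrite bounded_seq_compare; [lra | lra | apply exp_pos].
Qed.

Lemma cofinal_seq_exists (a b : Rbar) : Rbar_lt a b -> exists u, cofinal_seq a b u.
Proof.
destruct a as [a| |], b as [b| |]; simpl; intros Hab; try contradiction.
- exists (fun n => b - (b - a) / (1 + exp (IZR n))). apply cofinal_seq_bounded; auto.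
- exists (fun n => a + exp (IZR n)). apply cofinal_seq_right_ray.
- exists (fun n => b - exp (IZR (- n))). apply cofinal_seq_left_ray.
- exists IZR. apply cofinal_seq_line.
Qed.

(* ... and a rational one: pick a rational inside each step of a real one. *)
Lemma rational_cofinal_seq_exists (a b : Rbar) : Rbar_lt a b ->
  exists xs : Z -> Q, cofinal_seq a b (fun n => Q2R (xs n)).
Proof.
intros Hab. destruct (cofinal_seq_exists a b Hab) as [u Hu].
set (xs n := epsilon (inhabits 0%Q) (fun q => u n < Q2R q < u (n + 1)%Z)).
assert (Hxs : forall n, u n < Q2R (xs n) < u (n + 1)%Z).
{ intros n. apply epsilon_spec, rat_dense, (cs_step a b u Hu). }
exists xs. constructor.
- intros n. destruct (Hxs n).
  apply open_int_between with (u n) (u (n + 1)%Z); [apply Hu | apply Hu | lra].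
- intros n. destruct (Hxs n). destruct (Hxs (n + 1)%Z). lra.
- intros y Hy. destruct (cs_low a b u Hu y Hy) as [m Hm]. exists (m - 1)%Z.
  destruct (Hxs (m - 1)%Z). replace (m - 1 + 1)%Z with m in * by lia. lra.
- intros y Hy. destruct (cs_high a b u Hu y Hy) as [m Hm]. exists m. destruct (Hxs m). lra.
Qed.

Lemma Int_part_le (x y : R) : x <= y -> (Int_part x <= Int_part y)%Z.
Proof.
intros Hxy. destruct (Z.le_gt_cases (Int_part x) (Int_part y)) as [L|L]; auto.
exfalso. assert (L' : (Int_part y + 1 <= Int_part x)%Z) by lia. apply IZR_le in L'.
rewrite plus_IZR in L'. destruct (base_Int_part x). destruct (base_Int_part y). lra.
Qed.

Definition step_width (xs : Z -> Q) (n : Z) : Q := (xs (n + 1)%Z - xs n)%Q.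

Definition stretch (xs : Z -> Q) (x : R) : R :=
  Q2R (xs (Int_part x)) + (x - IZR (Int_part x)) * Q2R (step_width xs (Int_part x)).

Section Stretch.

Variable xs : Z -> Q.
Hypothesis xs_step : forall n, Q2R (xs n) < Q2R (xs (n + 1)%Z).

Lemma step_width_pos (n : Z) : 0 < Q2R (step_width xs n).
Proof. unfold step_width. rewrite Q2R_minus. specialize (xs_step n). lra. Qed.

Lemma stretch_bounds (x : R) :
  Q2R (xs (Int_part x)) <= stretch xs x < Q2R (xs (Int_part x + 1)%Z).
Proof.
assert (Hw := step_width_pos (Int_part x)). unfold stretch.
unfold step_width in *. rewrite Q2R_minus in Hw |- *.
destruct (base_Int_part x). split; nra.
Qed.

Lemma stretch_increasing (x y : R) : x < y -> stretch xs x < stretch xs y.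
Proof.
intros Lxy. destruct (Z.eq_dec (Int_part x) (Int_part y)) as [E|E].
- unfold stretch. rewrite E. assert (Hw := step_width_pos (Int_part y)). nra.
- assert (L : (Int_part x + 1 <= Int_part y)%Z).
  { assert (Hle := Int_part_le x y (Rlt_le _ _ Lxy)). lia. }
  apply (step_mono (fun n => Q2R (xs n)) xs_step) in L.
  destruct (stretch_bounds x). destruct (stretch_bounds y). lra.
Qed.

Lemma stretch_affine (x : R) : let n := Int_part x in
  stretch xs x = Q2R (step_width xs n) * x + Q2R (xs n - inject_Z n * step_width xs n).
Proof. simpl. unfold stretch. rewrite Q2R_minus Q2R_mult Q2R_inject_Z. ring. Qed.

Lemma stretch_inverse (n : Z) (y : R) : Q2R (xs n) <= y < Q2R (xs (n + 1)%Z) ->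
  let w := step_width xs n in
  let x := Q2R (/ w) * y + Q2R (inject_Z n - xs n / w) in
  Int_part x = n /\ stretch xs x = y.
Proof.
intros Hy w x.
assert (Hw := step_width_pos n). fold w in Hw.
assert (Hx : x = IZR n + (y - Q2R (xs n)) / Q2R w).
{ unfold x. rewrite Q2R_minus Q2R_div; [|apply Q2R_neq0; lra].
  rewrite Q2R_inv; [|apply Q2R_neq0; lra]. rewrite Q2R_inject_Z. field. lra. }
assert (Hwd : Q2R w = Q2R (xs (n + 1)%Z) - Q2R (xs n)) by (unfold w, step_width; apply Q2R_minus).
assert (Hfrac : 0 <= (y - Q2R (xs n)) / Q2R w < 1).
{ split.
  - apply Rle_mult_inv_pos; lra.
  - apply Rmult_lt_reg_r with (Q2R w); [lra|]. field_simplify; lra. }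
assert (Hn : Int_part x = n) by (symmetry; apply Int_part_spec; lra).
split; auto. unfold stretch. rewrite Hn. fold w. rewrite Hx. field. lra.
Qed.

End Stretch.

(* A set closed under positive rational affine maps is homogeneous: for a
   rational cofinal sequence [x_n] of (a, b), [stretch] maps [X] onto [X] in (a, b). *)
Lemma homogeneous_of_affine_closed (X : R -> Prop) : affine_closed X -> homogeneous X.
Proof.
intros Xaff a b Hab.
destruct (rational_cofinal_seq_exists a b Hab) as [xs Hxs].
assert (xs_step := cs_step _ _ _ Hxs).
exists (stretch xs). split; [|split].
- intros x Xx. split.
  + rewrite (stretch_affine xs x). apply Xaff; auto. apply step_width_pos; auto.
  + destruct (stretch_bounds xs xs_step x).
    apply open_int_between with (Q2R (xs (Int_part x))) (Q2R (xs (Int_part x + 1)%Z));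
      [apply Hxs | apply Hxs | lra].
- intros y [Xy Iy].
  destruct (cs_low _ _ _ Hxs y Iy) as [m Hm]. destruct (cs_high _ _ _ Hxs y Iy) as [M HM].
  destruct (step_locate (fun n => Q2R (xs n)) y m M xs_step Hm HM) as [n Hn].
  destruct (stretch_inverse xs xs_step n y Hn) as [_ Hy].
  eexists; split; [|exact Hy].
  apply Xaff; auto. rewrite Q2R_inv; [|apply Q2R_neq0].
  + apply Rinv_0_lt_compat, step_width_pos; auto.
  + apply Rgt_not_eq, step_width_pos; auto.
- intros x y _ _. apply stretch_increasing; auto.
Qed.

Lemma order_iso_trans (X Y Z : R -> Prop) :
  order_iso X Y -> order_iso Y Z -> order_iso X Z.
Proof.
intros [f [fXY [f_onto f_mono]]] [g [gYZ [g_onto g_mono]]].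
exists (fun x => g (f x)). split; [|split].
- intros x Xx. auto.
- intros z Zz. destruct (g_onto z Zz) as [y [Yy <-]]. destruct (f_onto y Yy) as [x [Xx <-]].
  exists x; auto.
- intros x y Xx Xy L. apply g_mono; auto.
Qed.

Lemma order_iso_sym (X Y : R -> Prop) : order_iso X Y -> order_iso Y X.
Proof.
intros [f [fXY [f_onto f_mono]]].
set (g y := epsilon (inhabits 0) (fun x => X x /\ f x = y)).
assert (Hg : forall y, Y y -> X (g y) /\ f (g y) = y).
{ intros y Yy. apply epsilon_spec. auto. }
assert (f_inj : forall x x', X x -> X x' -> f x = f x' -> x = x').
{ intros x x' Xx Xx' E. destruct (Rtotal_order x x') as [L|[L|L]]; auto;
  apply f_mono in L; auto; lra. }
exists g. split; [|split].
- intros y Yy. apply Hg; auto.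
- intros x Xx. exists (f x). split; auto.
  destruct (Hg (f x) (fXY x Xx)) as [Xg Eg]. apply f_inj; auto.
- intros y y' Yy Yy' L.
  destruct (Hg y Yy) as [Xg Eg]. destruct (Hg y' Yy') as [Xg' Eg'].
  destruct (Rlt_le_dec (g y) (g y')) as [L'|[L'|E]]; auto; exfalso.
  + apply f_mono in L'; auto. lra.
  + rewrite E Eg in Eg'. lra.
Qed.

Lemma order_iso_ext (X Y Y' : R -> Prop) :
  (forall y, Y y <-> Y' y) -> order_iso X Y -> order_iso X Y'.
Proof.
intros EY [f [fXY [f_onto f_mono]]]. exists f. split; [|split]; auto.
- intros x Xx. apply EY; auto.
- intros y Yy. apply f_onto, EY; auto.
Qed.

(* Isomorphic homogeneous sets are everywhere isomorphic: A ∩ I ≅ A ≅ B ≅ B ∩ I. *)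
Lemma everywhere_isomorphic_of_iso (A B : R -> Prop) :
  homogeneous A -> homogeneous B -> order_iso A B -> everywhere_isomorphic A B.
Proof.
intros HA HB AB a b Hab.
apply order_iso_trans with A; [apply order_iso_sym, HA; auto|].
apply order_iso_trans with B; auto.
Qed.

Definition translate (X : R -> Prop) (t : R) : R -> Prop := fun y => X (y - t).

Lemma order_iso_translate (X : R -> Prop) (t : R) : order_iso X (translate X t).
Proof.
exists (fun x => x + t). split; [|split].
- intros x Xx. unfold translate. replace (x + t - t) with x by ring. auto.
- intros y Xy. exists (y - t). split; auto. ring.
- intros x y _ _ L. lra.
Qed.

Lemma equipotent_translate (X Y : R -> Prop) (t : R) :
  equipotent X Y -> equipotent (translate X t) Y.
Proof.
intros [h [hXY [h_onto h_inj]]]. exists (fun y => h (y - t)). split; [|split].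
- intros y Xy. apply hXY, Xy.
- intros k Yk. destruct (h_onto k Yk) as [x [Xx <-]]. exists (x + t). unfold translate.
  replace (x + t - t) with x by ring. auto.
- intros x y Xx Xy E. apply h_inj in E; auto. lra.
Qed.

Lemma open_int_translate (a b : Rbar) (t y : R) :
  open_int (Rbar_plus a (- t)) (Rbar_plus b (- t)) (y - t) <-> open_int a b y.
Proof. unfold open_int. destruct a, b; simpl; split; intros [H1 H2]; split; auto; lra. Qed.

Lemma homogeneous_translate (X : R -> Prop) (t : R) :
  homogeneous X -> homogeneous (translate X t).
Proof.
intros HX a b Hab.
assert (Hab' : Rbar_lt (Rbar_plus a (- t)) (Rbar_plus b (- t))).
{ destruct a, b; simpl in *; auto; lra. }
apply order_iso_trans with X; [apply order_iso_sym, order_iso_translate|].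
apply order_iso_trans with (inter X (open_int (Rbar_plus a (- t)) (Rbar_plus b (- t)))); auto.
apply order_iso_ext with
  (translate (inter X (open_int (Rbar_plus a (- t)) (Rbar_plus b (- t)))) t);
  [|apply order_iso_translate].
intros y. unfold translate, inter. rewrite open_int_translate. tauto.
Qed.

Definition affine_hull (psi : R -> R) (K : R -> Prop) : R -> Prop :=
  fun x => exists q r k, K k /\ 0 < Q2R q /\ x = Q2R q * psi k + Q2R r.

Lemma affine_hull_closed (psi : R -> R) (K : R -> Prop) : affine_closed (affine_hull psi K).
Proof.
intros x q r [q1 [r1 [k [Kk [Hq1 ->]]]]] Hq.
exists (q * q1)%Q, (q * r1 + r)%Q, k. split; auto. rewrite Q2R_mult Q2R_plus Q2R_mult.
split; [apply Rmult_lt_0_compat; auto | ring].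
Qed.

(* For infinite [K] and [psi] injective on [K], the hull has the size of [K]:
   it injects into [K * Q * Q], hence into [K * nat], hence into [K]. *)
Lemma affine_hull_equipotent (psi : R -> R) (K : R -> Prop) : inf_set K ->
  (forall x y, K x -> K y -> psi x = psi y -> x = y) -> equipotent (affine_hull psi K) K.
Proof.
intros Kinf psi_inj.
destruct (nat_absorption K Kinf) as [f [fK f_inj]].
set (P x (p : Q * Q * R) := K (snd p) /\ 0 < Q2R (fst (fst p)) /\
        x = Q2R (fst (fst p)) * psi (snd p) + Q2R (snd (fst p))).
set (rep x := epsilon (inhabits (0%Q, 0%Q, 0)) (P x)).
assert (Hrep : forall x, affine_hull psi K x -> P x (rep x)).
{ intros x [q [r [k Hk]]]. apply epsilon_spec. exists (q, r, k). exact Hk. }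
apply equipotent_of_injections with
  (fun x => f (snd (rep x)) (pair_code (rat_code (fst (fst (rep x)))) (rat_code (snd (fst (rep x))))))
  psi.
- intros x Hx. apply fK, Hrep, Hx.
- intros x y Hx Hy E. destruct (Hrep x Hx) as [Kx [_ Ex]]. destruct (Hrep y Hy) as [Ky [_ Ey]].
  apply f_inj in E; auto. destruct E as [Ek Ecode].
  apply pair_code_inj in Ecode. destruct Ecode as [Eq Er].
  apply rat_code_inj in Eq. apply rat_code_inj in Er.
  rewrite Ex Ey Ek Eq Er. reflexivity.
- intros k Kk. exists 1%Q, 0%Q, k. rewrite RMicromega.Q2R_1 RMicromega.Q2R_0.
  split; auto. split; [lra | ring].
- exact psi_inj.
Qed.

(* A subset of a Q-subspace [M] is disjoint from its translate by a point
   [theta] outside [M]: a common point [x] would give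
   [theta = x + (-1) (x - theta)] in [M]. *)
Lemma disjoint_translate (M X : R -> Prop) (theta : R) :
  (forall x y, M x -> M y -> M (x + y)) -> (forall q x, M x -> M (Q2R q * x)) ->
  ~ M theta -> (forall x, X x -> M x) -> disjoint X (translate X theta).
Proof.
intros Madd Mscal Mth XM x [Xx Xx']. apply Mth.
assert (Hm1 : Q2R (-1) = -1) by (unfold Q2R; simpl; lra).
replace theta with (x + Q2R (-1) * (x - theta)) by (rewrite Hm1; ring).
apply Madd; [apply XM, Xx | apply Mscal, XM, Xx'].
Qed.

Lemma affine_hull_sub (M : R -> Prop) (psi : R -> R) (K : R -> Prop) :
  (forall x y, M x -> M y -> M (x + y)) -> (forall q x, M x -> M (Q2R q * x)) ->
  (forall q, M (Q2R q)) -> (forall x, M (psi x)) ->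
  forall x, affine_hull psi K x -> M x.
Proof. intros Madd Mscal MQ psiM x [q [r [k [_ [_ ->]]]]]. apply Madd; auto. Qed.

Theorem mainTheorem10 :
  forall K : R -> Prop, infinite_set K ->
    (exists A B : R -> Prop,
        disjoint A B /\ equipotent A K /\ equipotent B K /\
        homogeneous A /\ homogeneous B /\ everywhere_isomorphic A B) /\
    (exists X : R -> Prop, equipotent X K /\ homogeneous X).
Proof.
intros K HK.
destruct (rational_complement (sqrt 2) sqrt2_irrational)
  as [M [Madd [Mscal [MQ [Mth Mdec]]]]].
assert (Minf : inf_set M).
{ apply inf_set_of_injective_seq with (fun n => Q2R (inject_Z (Z.of_nat n))).
  - intros n. apply MQ.
  - intros n m E. rewrite !Q2R_inject_Z in E. apply eq_IZR in E. lia. }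
destruct (injection_into_complement M (sqrt 2) Minf Mdec) as [psi [psiM psi_inj]].
set (A := affine_hull psi K). set (B := translate A (sqrt 2)).
assert (HA : homogeneous A) by apply homogeneous_of_affine_closed, affine_hull_closed.
assert (HB : homogeneous B) by apply homogeneous_translate, HA.
assert (AK : equipotent A K).
{ apply affine_hull_equipotent; [exact HK | intros x y _ _; apply psi_inj]. }
split; [exists A, B | exists A]; repeat split; auto.
- apply disjoint_translate with M; auto. apply affine_hull_sub; auto.
- apply equipotent_translate, AK.
- apply everywhere_isomorphic_of_iso; auto. apply order_iso_translate.

Qed.
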